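(* Let $K$ be a connected $2$-dimensional simplicial complex (with or without boundary), and let $f: K\to\mathbb{R}^3$ be a polyhedron. Then the following two statements are equivalent: (i) $f(K)$ is not embedded in $\mathbb{R}^3$, i.e. $f$ is not injective; (ii) there exist two simplices $\sigma_1,\sigma_2\in K$ with $\dim\sigma_1\leqslant 1$, and points $u_1\in\sigma_1$, $u_2\in\sigma_2$, such that $u_1\neq u_2$ and $f(u_1)=f(u_2)$.
   Context: A polyhedron is a continuous map $f: K\to\mathbb{R}^3$ from (the geometric realization of) a connected $2$-dimensional simplicial complex $K$ which is affine linear and nondegenerate (i.e. injective) on every simplex of $K$. The polyhedron is called embedded if $f$ is injective. *)

From HB Require Import structures.
From mathcomp Require Import all_boot all_order all_algebra.
From mathcomp Require Import reals.
Set Implicit Arguments. Unset Strict Implicit. Unset Printing Implicit Defensive.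
Import Order.TTheory GRing.Theory Num.Theory.
Local Open Scope ring_scope.

Definition is_complex (V : finType) (K : {set {set V}}) : Prop :=
  set0 \notin K /\
  (forall s t : {set V}, s \in K -> t \subset s -> t != set0 -> t \in K).

(* K is 2-dimensional: every simplex has at most 3 vertices (dim <= 2) and
   some simplex has exactly 3 vertices (dim = 2). *)
Definition dim2 (V : finType) (K : {set {set V}}) : Prop :=
  (forall s, s \in K -> #|s| <= 3)%N /\ exists s, s \in K /\ #|s| = 3%N.

Definition complex_connected (V : finType) (K : {set {set V}}) : Prop :=
  forall v w : V, [set v] \in K -> [set w] \in K ->
    connect (fun a b => [set a; b] \in K) v w.

(* Points of the geometric realization are given by barycentric coordinates
   x : V -> R.  [in_simplex s x] : x lies in the closed geometric simplex s. *)
Definition in_simplex (R : realType) (V : finType) (s : {set V})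
  (x : {ffun V -> R}) : Prop :=
  (forall v, 0 <= x v) /\ \sum_v x v = 1 /\ (forall v, v \notin s -> x v = 0).

Definition in_realization (R : realType) (V : finType) (K : {set {set V}})
  (x : {ffun V -> R}) : Prop :=
  exists2 s, s \in K & in_simplex s x.

(* The map |K| -> R^3 which is affine on each simplex, sending vertex v to p v. *)
Definition fmap (R : realType) (V : finType) (p : V -> 'rV[R]_3)
  (x : {ffun V -> R}) : 'rV[R]_3 :=
  \sum_v x v *: p v.

Definition polyhedron (R : realType) (V : finType) (K : {set {set V}})
  (p : V -> 'rV[R]_3) : Prop :=
  forall s, s \in K -> forall x y : {ffun V -> R},
    in_simplex s x -> in_simplex s y -> fmap p x = fmap p y -> x = y.

Definition embedded (R : realType) (V : finType) (K : {set {set V}})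
  (p : V -> 'rV[R]_3) : Prop :=
  forall x y : {ffun V -> R},
    in_realization K x -> in_realization K y -> fmap p x = fmap p y -> x = y.

From HB Require Import structures.
From mathcomp Require Import all_boot all_order all_algebra.
From mathcomp Require Import reals.
From Stdlib Require Import Classical.
Import Order.TTheory GRing.Theory Num.Theory.
Local Open Scope ring_scope.
Set Implicit Arguments. Unset Strict Implicit.

(* Let x != y lie in triangles s and t with f x = f y.  The tangent planes of
   s and t are 2-dimensional, so (da, db) |-> f da - f db, from their product
   to R^3, has a nonzero kernel vector.  Sliding x along da and y along db
   keeps the two images equal; slide forwards, and then backwards, until one
   of the points reaches the boundary of its triangle, hence an edge.  If the
   two points differ at one of these exit times we are done; otherwise the two
   affine paths agree at two distinct times (or both times are 0), so x = y. *)

Lemma rV_dependent (F : fieldType) (I : finType) n (c : I -> 'rV[F]_n) :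
  (n < #|I|)%N -> exists2 w : I -> F, exists i, w i != 0 & \sum_i w i *: c i = 0.
Proof.
move=> n_lt_I.
pose M : 'M[F]_(#|I|, n) := \matrix_k c (enum_val k).
have : ~~ row_free M.
  by rewrite -row_leq_rank -ltnNge (leq_ltn_trans (rank_leq_col M)).
rewrite -kermx_eq0 -nz_row_eq0; set u := nz_row _ => u_neq0.
have /sub_kermxP uM0 : (u <= kermx M)%MS by exact: nz_row_sub.
exists (fun i => u 0 (enum_rank i)).
  have [k uk] : exists k, u 0 k != 0.
    apply/existsP; apply: contraR u_neq0 => /existsPn u0.
    by apply/eqP/rowP => k; rewrite mxE; apply/eqP/negbNE.
  by exists (enum_val k); rewrite enum_valK.
rewrite -[RHS]uM0 mulmx_sum_row [RHS](reindex _ (onW_bij _ (enum_rank_bij I))) /=.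
by apply: eq_bigr => i _; rewrite rowK enum_rankK.
Qed.

Lemma ray_exit (R : realFieldType) (I : finType) (c d : I -> R) :
  (forall i, 0 <= c i) -> (exists i, d i < 0) ->
  exists2 r, 0 <= r & (forall i, 0 <= c i + r * d i) /\
    exists2 i, d i < 0 & c i + r * d i = 0.
Proof.
move=> c_ge0 [i0 di0].
have [i di_lt0 i_min] :=
  @arg_minP _ R I i0 (fun i => d i < 0) (fun i => c i / - d i) di0.
have r_ge0 : 0 <= c i / - d i by rewrite divr_ge0 // oppr_ge0 ltW.
exists (c i / - d i) => //; split; last first.
  by exists i => //; rewrite -mulrNN mulNr divfK ?subrr // oppr_eq0 ltr0_neq0.
move=> j; have [dj_lt0|dj_ge0] := ltrP (d j) 0; last exact: addr_ge0 (mulr_ge0 _ _).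
by have := i_min j dj_lt0; rewrite ler_pdivlMr ?oppr_gt0 // mulrN -subr_ge0 opprK.
Qed.

Lemma sumr_eq0_lt0 (R : realDomainType) (I : finType) (f : I -> R) i :
  \sum_j f j = 0 -> f i != 0 -> exists j, f j < 0.
Proof.
move=> sum0 fi; have [j fj|f_ge0] := pickP (fun j => f j < 0); first by exists j.
move: fi; rewrite (psumr_eq0P _ sum0) ?eqxx // => j _.
by rewrite leNgt f_ge0.
Qed.

Lemma sumr_eq0_sign (R : realDomainType) (I : finType) (f : I -> R) i :
  \sum_j f j = 0 -> f i != 0 -> (exists j, f j < 0) /\ (exists j, 0 < f j).
Proof.
move=> sum0 fi; split; first exact: sumr_eq0_lt0 sum0 fi.
have sumN0 : \sum_j - f j = 0 by rewrite sumrN sum0 oppr0.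
have fNi : - f i != 0 by rewrite oppr_eq0.
by have [j] := sumr_eq0_lt0 sumN0 fNi; rewrite oppr_lt0; exists j.
Qed.

Lemma eq_line_at2 (F : fieldType) (M : lmodType F) (a b a' b' : M) r1 r2 :
  r1 != r2 -> a + r1 *: b = a' + r1 *: b' -> a + r2 *: b = a' + r2 *: b' ->
  a = a'.
Proof.
move=> r12 e1 e2.
have : (r1 - r2) *: b = (r1 - r2) *: b'.
  rewrite !scalerBl -[LHS]add0r -(subrr a) addrACA -opprD e1 e2.
  by rewrite opprD addrACA subrr add0r.
move/scalerI; rewrite subr_eq0 => /(_ r12) bb'.
by move: e1; rewrite bb' => /addIr.
Qed.

Section Barycentric.
Variables (R : realType) (V : finType).
Implicit Types (s t : {set V}) (x y d : {ffun V -> R}) (p : V -> 'rV[R]_3).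

Definition tangent s d := \sum_v d v = 0 /\ forall v, v \notin s -> d v = 0.

Definition slide x d (r : R) : {ffun V -> R} := [ffun v => x v + r * d v].

Lemma fmap_slide p x d r : fmap p (slide x d r) = fmap p x + r *: fmap p d.
Proof.
rewrite /fmap scaler_sumr -big_split; apply: eq_bigr => v _.
by rewrite ffunE scalerDl scalerA.
Qed.

Lemma slide0 x d : slide x d 0 = x.
Proof. by apply/ffunP => v; rewrite ffunE mul0r addr0. Qed.

Lemma slide_in_simplex s x d r :
  in_simplex s x -> tangent s d -> (forall v, 0 <= x v + r * d v) ->
  in_simplex s (slide x d r).
Proof.
move=> [_ [x1 x_s]] [d0 d_s] ge0; split; [|split].
- by move=> v; rewrite ffunE.
- by under eq_bigr do rewrite ffunE; rewrite big_split -mulr_sumr /= x1 d0 mulr0 addr0.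
- by move=> v vNs; rewrite ffunE x_s // d_s // mulr0 addr0.
Qed.

Definition tri_dir (a1 a2 a3 : V) (w2 w3 : R) : {ffun V -> R} :=
  [ffun v => w2 * ((v == a2)%:R - (v == a1)%:R)
             + w3 * ((v == a3)%:R - (v == a1)%:R)].

Lemma fmap_tri_dir p a1 a2 a3 w2 w3 :
  fmap p (tri_dir a1 a2 a3 w2 w3) = w2 *: (p a2 - p a1) + w3 *: (p a3 - p a1).
Proof.
have fmap_delta a : \sum_v (v == a)%:R *: p v = p a.
  by rewrite (bigD1 a) //= eqxx scale1r big1 ?addr0 // => v /negbTE ->; rewrite scale0r.
rewrite /fmap; under eq_bigr do rewrite ffunE scalerDl -!scalerA !scalerBl.
by rewrite big_split /= -!scaler_sumr !sumrB !fmap_delta.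
Qed.

Lemma tangent_tri_dir s a1 a2 a3 w2 w3 :
  a1 \in s -> a2 \in s -> a3 \in s -> tangent s (tri_dir a1 a2 a3 w2 w3).
Proof.
move=> a1s a2s a3s; split.
  have sum_delta a : \sum_v (v == a)%:R = 1 :> R.
    by rewrite (bigD1 a) //= eqxx big1 ?addr0 // => v /negbTE ->.
  under eq_bigr do rewrite ffunE.
  by rewrite big_split /= -!mulr_sumr !sumrB !sum_delta subrr !mulr0 addr0.
move=> v vNs; have vNa a : a \in s -> (v == a) = false.
  by move=> a_s; apply: contraNF vNs => /eqP ->.
by rewrite ffunE !vNa // subrr !mulr0 addr0.
Qed.

Lemma tri_dirE2 a1 a2 a3 w2 w3 :
  a1 != a2 -> a2 != a3 -> tri_dir a1 a2 a3 w2 w3 a2 = w2.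
Proof.
move=> a12 a23; rewrite ffunE eqxx eq_sym (negbTE a12) (negbTE a23).
by rewrite !subr0 mulr0 mulr1 addr0.
Qed.

Lemma tri_dirE3 a1 a2 a3 w2 w3 :
  a2 != a3 -> a3 != a1 -> tri_dir a1 a2 a3 w2 w3 a3 = w3.
Proof.
move=> a23 a31; rewrite ffunE eqxx (negbTE a31) eq_sym (negbTE a23).
by rewrite !subr0 mulr0 mulr1 add0r.
Qed.

Lemma common_tangent p s t : (2 < #|s|)%N -> (2 < #|t|)%N ->
  exists da db, [/\ tangent s da, tangent t db, fmap p da = fmap p db
                   & exists v, (da v != 0) || (db v != 0)].
Proof.
move=> /card_gt2P[a1 [a2 [a3 [[a1s a2s a3s] [a12 a23 a31]]]]].
move=> /card_gt2P[b1 [b2 [b3 [[b1t b2t b3t] [b12 b23 b31]]]]].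
pose u (i : (bool + bool)%type) := match i with
  | inl k => p (if k then a3 else a2) - p a1
  | inr k => p (if k then b3 else b2) - p b1 end.
have /(rV_dependent u)[w [i wi] wu0] : (3 < #|{: bool + bool}|)%N.
  by rewrite card_sum card_bool.
rewrite big_sumType !big_bool /= in wu0.
exists (tri_dir a1 a2 a3 (w (inl false)) (w (inl true))).
exists (tri_dir b1 b2 b3 (- w (inr false)) (- w (inr true))); split.
- exact: tangent_tri_dir.
- exact: tangent_tri_dir.
- rewrite !fmap_tri_dir !scaleNr; apply/eqP; rewrite -subr_eq0 opprD !opprK.
  by rewrite [w (inl false) *: _ + _]addrC [w (inr false) *: _ + _]addrC wu0.
case: i wi => -[] wi; [exists a3 | exists a2 | exists b3 | exists b2];
  by rewrite ?tri_dirE2 ?tri_dirE3 ?oppr_eq0 ?wi ?orbT.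
Qed.

Lemma complex_setD1 (K : {set {set V}}) s v :
  is_complex K -> s \in K -> (1 < #|s|)%N -> s :\ v \in K.
Proof.
move=> [_ K_closed] sK s_gt1; apply: (K_closed s) => //; first exact: subsetDl.
rewrite -card_gt0 -(ltn_add2l (v \in s)) -cardsD1 addn0.
exact: leq_ltn_trans (leq_b1 _) s_gt1.
Qed.

Lemma in_simplex_setD1 s x v :
  in_simplex s x -> x v = 0 -> in_simplex (s :\ v) x.
Proof.
move=> [x_ge0 [x1 x_s]] xv0; split; [|split] => // u.
by rewrite in_setD1 negb_and negbK => /orP[/eqP ->|/x_s].
Qed.

Definition double_point_on_edge (K : {set {set V}}) p : Prop :=
  exists (s1 s2 : {set V}) (u1 u2 : {ffun V -> R}),
    [/\ s1 \in K, s2 \in K, (#|s1| <= 2)%N,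
        in_simplex s1 u1 /\ in_simplex s2 u2 &
        u1 <> u2 /\ fmap p u1 = fmap p u2].

Lemma double_point_opposite_edge K p s t x y v :
  is_complex K -> s \in K -> t \in K -> #|s| = 3%N ->
  in_simplex s x -> in_simplex t y -> v \in s -> x v = 0 ->
  x <> y -> fmap p x = fmap p y -> double_point_on_edge K p.
Proof.
move=> K_complex sK tK s3 xs yt vs xv0 x_neq_y fxy.
have sDv2 : #|s :\ v| = 2%N by move: s3; rewrite (cardsD1 v) vs => -[].
exists (s :\ v), t, x, y; split => //.
- by apply: complex_setD1; rewrite ?s3.
- by rewrite sDv2.
- by split => //; apply: in_simplex_setD1.
Qed.

Section Sliding.
Variables (K : {set {set V}}) (p : V -> 'rV[R]_3) (s t : {set V}).
Variables (x y da db : {ffun V -> R}).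
Hypotheses (K_complex : is_complex K) (sK : s \in K) (tK : t \in K).
Hypotheses (s3 : #|s| = 3%N) (t3 : #|t| = 3%N).
Hypotheses (xs : in_simplex s x) (yt : in_simplex t y).
Hypotheses (da_s : tangent s da) (db_t : tangent t db).
Hypotheses (fxy : fmap p x = fmap p y) (fd : fmap p da = fmap p db).

(* The pair of points and the pair of directions, as single families indexed
   by V + V, so that one exit time keeps both points in their triangles. *)
Let c (i : (V + V)%type) := match i with inl v => x v | inr v => y v end.
Let d (i : (V + V)%type) := match i with inl v => da v | inr v => db v end.

Lemma exit_double_point r i :
  (forall j, 0 <= c j + r * d j) -> d i != 0 -> c i + r * d i = 0 ->
  slide x da r <> slide y db r -> double_point_on_edge K p.
Proof.
move=> ge0 di_neq0 ci0 slides_neq.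
have fslide : fmap p (slide x da r) = fmap p (slide y db r).
  by rewrite !fmap_slide fxy fd.
have xs' := slide_in_simplex xs da_s (fun v => ge0 (inl v)).
have yt' := slide_in_simplex yt db_t (fun v => ge0 (inr v)).
case: i di_neq0 ci0 => v /= dv cv.
- apply: (double_point_opposite_edge (v := v)) xs' yt' _ _ slides_neq fslide => //.
  + by apply: contraNT dv => /da_s.2 ->.
  + by rewrite ffunE.
- apply: (double_point_opposite_edge (v := v)) yt' xs' _ _ _ (esym fslide) => //.
  + by apply: contraNT dv => /db_t.2 ->.
  + by rewrite ffunE.
  + by move=> /esym.
Qed.

Hypothesis x_neq_y : x <> y.
Hypothesis d_neq0 : exists v, (da v != 0) || (db v != 0).

Lemma triangle_collision_double_point : double_point_on_edge K p.
Proof.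
have [[i d_neg] [j d_pos]] : (exists i, d i < 0) /\ (exists j, 0 < d j).
  case: d_neq0 => v /orP[dv|dv].
  - have [[u du] [u' du']] := sumr_eq0_sign da_s.1 dv.
    by split; [exists (inl u) | exists (inl u')].
  - have [[u du] [u' du']] := sumr_eq0_sign db_t.1 dv.
    by split; [exists (inr u) | exists (inr u')].
have c_ge0 : forall i, 0 <= c i by case=> v; [exact: xs.1 | exact: yt.1].
have [r1 r1_ge0 [ge0_1 [i1 di1 ci1]]] := ray_exit c_ge0 (ex_intro _ i d_neg).
have dNj : - d j < 0 by rewrite oppr_lt0.
have [r2 r2_ge0 [ge0_2 [i2 di2 ci2]]] :=
  ray_exit (d := fun i => - d i) c_ge0 (ex_intro _ j dNj).
have [e1|] := eqVneq (slide x da r1) (slide y db r1); last first.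
  by move/eqP; apply: exit_double_point ge0_1 (ltr0_neq0 di1) ci1.
have [e2|] := eqVneq (slide x da (- r2)) (slide y db (- r2)); last first.
  move/eqP; apply: (exit_double_point (i := i2)).
  - by move=> k; rewrite mulNr -mulrN; exact: ge0_2.
  - by rewrite -oppr_eq0 ltr0_neq0.
  - by rewrite mulNr -mulrN.
exfalso; apply: x_neq_y.
have [r1_0|r1_neq0] := eqVneq r1 0; first by move: e1; rewrite r1_0 !slide0.
have r12 : r1 != - r2.
  by rewrite gt_eqF // (le_lt_trans _ (_ : 0 < r1)) ?oppr_le0 // lt0r r1_neq0.
apply/ffunP => v; apply: (eq_line_at2 (M := R^o) (b := da v) (b' := db v) r12).
- by move/ffunP/(_ v): e1; rewrite !ffunE.
- by move/ffunP/(_ v): e2; rewrite !ffunE.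
Qed.

End Sliding.

Lemma collision_double_point (K : {set {set V}}) p s t x y :
  is_complex K -> (forall s, s \in K -> #|s| <= 3)%N -> s \in K -> t \in K ->
  in_simplex s x -> in_simplex t y -> x <> y -> fmap p x = fmap p y ->
  double_point_on_edge K p.
Proof.
move=> K_complex dim_le3 sK tK xs yt x_neq_y fxy.
have [s_le2|s_gt2] := leqP #|s| 2; first by exists s, t, x, y.
have [t_le2|t_gt2] := leqP #|t| 2.
  by exists t, s, y, x; split => //; split => // /esym.
have card3 u : u \in K -> (2 < #|u|)%N -> #|u| = 3%N.
  by move=> uK u_gt2; apply/eqP; rewrite eqn_leq dim_le3.
have [da [db [da_s db_t fd d_neq0]]] := common_tangent p s_gt2 t_gt2.
exact: (triangle_collision_double_point K_complex sK tK
          (card3 _ sK s_gt2) (card3 _ tK t_gt2) xs yt da_s db_t fxy fd x_neq_y d_neq0).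
Qed.

End Barycentric.

Theorem lemma1 (R : realType) (V : finType) (K : {set {set V}})
  (p : V -> 'rV[R]_3) :
  is_complex K -> dim2 K -> complex_connected K -> polyhedron K p ->
  (~ embedded K p <->
   exists (s1 s2 : {set V}) (u1 u2 : {ffun V -> R}),
     [/\ s1 \in K, s2 \in K, (#|s1| <= 2)%N,
         in_simplex s1 u1 /\ in_simplex s2 u2 &
         u1 <> u2 /\ fmap p u1 = fmap p u2]).
Proof.
move=> K_complex [dim_le3 _] _ _; split.
- move=> not_embedded; apply: NNPP => no_double_point.
  apply: not_embedded => x y [s sK xs] [t tK yt] fxy; apply: NNPP => x_neq_y.
  apply: no_double_point.
  exact: (collision_double_point K_complex dim_le3 sK tK xs yt x_neq_y fxy).
- move=> [s1 [s2 [u1 [u2 [s1K s2K _ [u1s u2s] [u_neq fu]]]]]] embedded.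
  by apply: u_neq; apply: embedded => //; [exists s1 | exists s2].
Qed.
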